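(* Let $d\sigma^2$ be an admissible positive semi-definite metric on a $2$-manifold $M^2$ and let $p$ be an intrinsic cross cap of $d\sigma^2$. Then $p$ is an isolated singular point of $d\sigma^2$, and the null space $\mathcal{N}_p$ is one-dimensional.
   Context: For a smooth positive semi-definite metric $d\sigma^2$ with $\langle\cdot,\cdot\rangle=d\sigma^2$: singular points are where it is not positive definite; $\mathcal{N}_p=\{v\in T_pM^2: d\sigma^2(v,w)=0\ \forall w\}$; the Kossowski pseudo-connection is $\Gamma(X,Y,Z)=\tfrac12\bigl(X\langle Y,Z\rangle+Y\langle X,Z\rangle-Z\langle X,Y\rangle+\langle[X,Y],Z\rangle-\langle[X,Z],Y\rangle-\langle[Y,Z],X\rangle\bigr)$; admissible: at each singular point $p$, $\Gamma(V_1,V_2,V_3)(p)=0$ whenever $V_3(p)\in\mathcal{N}_p$. A singular point $p$ of an admissible metric is an intrinsic cross cap if, in a local coordinate system $(u,v)$ centered at $p$ with $d\sigma^2=E\,du^2+2F\,du\,dv+G\,dv^2$ and $\delta:=EG-F^2$, the Hessian determinant $\delta_{uu}\delta_{vv}-\delta_{uv}^2$ does not vanish at $p$ (this is independent of the coordinates). *)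

From Stdlib Require Import Reals.
From Coquelicot Require Import Coquelicot.
Open Scope R_scope.

(* Local model: an open set U of the (u,v)-coordinate plane; functions are R -> R -> R. *)
Definition fun2 := R -> R -> R.

Definition open2 (U : R -> R -> Prop) : Prop :=
  forall u v, U u v -> exists eps, 0 < eps /\
    forall x y, Rabs (x - u) < eps -> Rabs (y - v) < eps -> U x y.

Definition du (f : fun2) : fun2 := fun u v => Derive (fun x => f x v) u.
Definition dv (f : fun2) : fun2 := fun u v => Derive (fun y => f u y) v.

Fixpoint Ck (k : nat) (U : R -> R -> Prop) (f : fun2) : Prop :=
  match k with
  | O => forall u v, U u v -> continuity_2d_pt f u v
  | S k' => (forall u v, U u v -> continuity_2d_pt f u v /\
                 ex_derive (fun x => f x v) u /\ ex_derive (fun y => f u y) v)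
            /\ Ck k' U (du f) /\ Ck k' U (dv f)
  end.

Definition smooth (U : R -> R -> Prop) (f : fun2) : Prop := forall k, Ck k U f.

(* A metric dsigma^2 = E du^2 + 2 F du dv + G dv^2 *)
Record metric := Metric { mE : fun2; mF : fun2; mG : fun2 }.

Definition bform (g : metric) (u v a1 b1 a2 b2 : R) : R :=
  mE g u v * a1 * a2 + mF g u v * (a1 * b2 + b1 * a2) + mG g u v * b1 * b2.

Definition smooth_metric (U : R -> R -> Prop) (g : metric) : Prop :=
  smooth U (mE g) /\ smooth U (mF g) /\ smooth U (mG g).

Definition psd_metric (U : R -> R -> Prop) (g : metric) : Prop :=
  forall u v, U u v -> forall a b, 0 <= bform g u v a b a b.

Definition singular (U : R -> R -> Prop) (g : metric) (u v : R) : Prop :=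
  U u v /\ ~ (forall a b, (a, b) <> (0, 0) -> 0 < bform g u v a b a b).

Definition nullspace (g : metric) (u v a b : R) : Prop :=
  forall c d, bform g u v a b c d = 0.

(* vector fields X = X1 d/du + X2 d/dv *)
Record vfield := VF { vf1 : fun2; vf2 : fun2 }.

Definition smooth_vf (U : R -> R -> Prop) (X : vfield) : Prop :=
  smooth U (vf1 X) /\ smooth U (vf2 X).

Definition vact (X : vfield) (f : fun2) : fun2 :=
  fun u v => vf1 X u v * du f u v + vf2 X u v * dv f u v.

Definition lie (X Y : vfield) : vfield :=
  VF (fun u v => vact X (vf1 Y) u v - vact Y (vf1 X) u v)
     (fun u v => vact X (vf2 Y) u v - vact Y (vf2 X) u v).

Definition gpair (g : metric) (X Y : vfield) : fun2 :=
  fun u v => bform g u v (vf1 X u v) (vf2 X u v) (vf1 Y u v) (vf2 Y u v).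

Definition kossowski (g : metric) (X Y Z : vfield) : fun2 :=
  fun u v => / 2 * ( vact X (gpair g Y Z) u v + vact Y (gpair g X Z) u v
                     - vact Z (gpair g X Y) u v
                     + gpair g (lie X Y) Z u v - gpair g (lie X Z) Y u v
                     - gpair g (lie Y Z) X u v).

Definition admissible (U : R -> R -> Prop) (g : metric) : Prop :=
  forall u v, singular U g u v ->
  forall V1 V2 V3 : vfield, smooth_vf U V1 -> smooth_vf U V2 -> smooth_vf U V3 ->
    nullspace g u v (vf1 V3 u v) (vf2 V3 u v) ->
    kossowski g V1 V2 V3 u v = 0.

Definition delta (g : metric) : fun2 :=
  fun u v => mE g u v * mG g u v - mF g u v ^ 2.

Definition intrinsic_cross_cap (U : R -> R -> Prop) (g : metric) : Prop :=
  singular U g 0 0 /\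
  du (du (delta g)) 0 0 * dv (dv (delta g)) 0 0 - du (dv (delta g)) 0 0 ^ 2 <> 0.

Definition isolated_singular (U : R -> R -> Prop) (g : metric) : Prop :=
  exists r, 0 < r /\ forall u v, (u, v) <> (0, 0) -> u ^ 2 + v ^ 2 < r ^ 2 ->
    ~ singular U g u v.

Definition nullspace_dim1 (g : metric) (u v : R) : Prop :=
  exists a0 b0, (a0, b0) <> (0, 0) /\
    forall a b, nullspace g u v a b <-> exists t, a = t * a0 /\ b = t * b0.

From Stdlib Require Import Reals Lra Psatz.
From Coquelicot Require Import Coquelicot.
Open Scope R_scope.

(* Positive semi-definiteness makes [delta = EG - F^2] a nonnegative smooth
   function, and it vanishes at the singular point.  The origin is therefore a
   minimum of [delta]: its gradient vanishes and its Hessian is positive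
   semi-definite, hence positive definite since it is nondegenerate, and Taylor's
   formula gives [delta > 0] on a punctured neighbourhood, where the metric is
   then positive definite.  At the origin [det (E F; F G) = 0], so the null space
   is a line unless [E = F = G = 0]; but then [E] and [G] are minimal at the
   origin, so [E_u = G_u = 0] and [delta_uu = -2 F_u^2 <= 0], contradicting the
   positivity of the Hessian. *)

Section OpenSet.

Variable U : R -> R -> Prop.
Hypothesis HU : open2 U.

Lemma open2_locally_2d u v : U u v -> locally_2d U u v.
Proof.
  intros Huv. destruct (HU u v Huv) as [e [He H]].
  exists (mkposreal e He). intros x y Hx Hy. now apply H.
Qed.

Lemma open2_locally_u u v : U u v -> locally u (fun x => U x v).
Proof.
  intros Huv. destruct (open2_locally_2d u v Huv) as [e He].
  exists e. intros x Hx. apply He; [exact Hx|].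
  rewrite Rminus_diag, Rabs_R0. apply cond_pos.
Qed.

Lemma open2_locally_v u v : U u v -> locally v (fun y => U u y).
Proof.
  intros Huv. destruct (open2_locally_2d u v Huv) as [e He].
  exists e. intros y Hy. apply He; [|exact Hy].
  rewrite Rminus_diag, Rabs_R0. apply cond_pos.
Qed.

End OpenSet.

Section Smoothness.

Variable U : R -> R -> Prop.
Hypothesis HU : open2 U.

Lemma Ck_ext k f h : (forall u v, U u v -> f u v = h u v) -> Ck k U f -> Ck k U h.
Proof.
  revert f h. induction k as [|k IH]; intros f h Hfh Hf; simpl in *.
  - intros u v Huv. apply continuity_2d_pt_ext_loc with f; [|now apply Hf].
    apply locally_2d_impl with (2 := open2_locally_2d U HU u v Huv).
    apply locally_2d_forall. intros x y. apply Hfh.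
  - destruct Hf as [H0 [H1 H2]]. split; [|split].
    + intros u v Huv. destruct (H0 u v Huv) as [C [D1 D2]]. split; [|split].
      * apply continuity_2d_pt_ext_loc with f; [|exact C].
        apply locally_2d_impl with (2 := open2_locally_2d U HU u v Huv).
        apply locally_2d_forall. intros x y. apply Hfh.
      * apply ex_derive_ext_loc with (fun x => f x v); [|exact D1].
        apply filter_imp with (2 := open2_locally_u U HU u v Huv). intros x. apply Hfh.
      * apply ex_derive_ext_loc with (fun y => f u y); [|exact D2].
        apply filter_imp with (2 := open2_locally_v U HU u v Huv). intros y. apply Hfh.
    + apply IH with (du f); [|exact H1]. intros u v Huv. apply Derive_ext_loc.
      apply filter_imp with (2 := open2_locally_u U HU u v Huv). intros x. apply Hfh.
    + apply IH with (dv f); [|exact H2]. intros u v Huv. apply Derive_ext_loc.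
      apply filter_imp with (2 := open2_locally_v U HU u v Huv). intros y. apply Hfh.
Qed.

Lemma Ck_S k f : Ck (S k) U f -> Ck k U f.
Proof.
  revert f. induction k as [|k IH]; intros f Hf.
  - intros u v Huv. now apply Hf.
  - destruct Hf as [H0 [H1 H2]]. split; [exact H0|]. split; now apply IH.
Qed.

Lemma Ck_plus k f h : Ck k U f -> Ck k U h -> Ck k U (fun u v => f u v + h u v).
Proof.
  revert f h. induction k as [|k IH]; intros f h Hf Hh.
  - intros u v Huv. apply continuity_2d_pt_plus; auto.
  - destruct Hf as [F0 [F1 F2]], Hh as [H0 [H1 H2]]. split; [|split].
    + intros u v Huv. destruct (F0 u v Huv) as [C [D1 D2]], (H0 u v Huv) as [C' [D1' D2']].
      split; [|split].
      * apply continuity_2d_pt_plus; auto.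
      * apply (ex_derive_plus (fun x => f x v) (fun x => h x v)); auto.
      * apply (ex_derive_plus (fun y => f u y) (fun y => h u y)); auto.
    + apply Ck_ext with (fun u v => du f u v + du h u v); auto.
      intros u v Huv. destruct (F0 u v Huv) as [_ [D1 _]], (H0 u v Huv) as [_ [D1' _]].
      unfold du. now rewrite (Derive_plus (fun x => f x v) (fun x => h x v)).
    + apply Ck_ext with (fun u v => dv f u v + dv h u v); auto.
      intros u v Huv. destruct (F0 u v Huv) as [_ [_ D2]], (H0 u v Huv) as [_ [_ D2']].
      unfold dv. now rewrite (Derive_plus (fun y => f u y) (fun y => h u y)).
Qed.

Lemma Ck_opp k f : Ck k U f -> Ck k U (fun u v => - f u v).
Proof.
  revert f. induction k as [|k IH]; intros f Hf.
  - intros u v Huv. apply continuity_2d_pt_opp; auto.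
  - destruct Hf as [F0 [F1 F2]]. split; [|split].
    + intros u v Huv. destruct (F0 u v Huv) as [C [D1 D2]]. split; [|split].
      * apply continuity_2d_pt_opp; auto.
      * apply (ex_derive_opp (fun x => f x v)); auto.
      * apply (ex_derive_opp (fun y => f u y)); auto.
    + apply Ck_ext with (fun u v => - du f u v); auto.
      intros u v _. unfold du. now rewrite (Derive_opp (fun x => f x v)).
    + apply Ck_ext with (fun u v => - dv f u v); auto.
      intros u v _. unfold dv. now rewrite (Derive_opp (fun y => f u y)).
Qed.

Lemma Ck_mult k f h : Ck k U f -> Ck k U h -> Ck k U (fun u v => f u v * h u v).
Proof.
  revert f h. induction k as [|k IH]; intros f h Hf Hh.
  - intros u v Huv. apply continuity_2d_pt_mult; auto.
  - pose proof (Ck_S k f Hf) as Hf'. pose proof (Ck_S k h Hh) as Hh'.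
    destruct Hf as [F0 [F1 F2]], Hh as [H0 [H1 H2]]. split; [|split].
    + intros u v Huv. destruct (F0 u v Huv) as [C [D1 D2]], (H0 u v Huv) as [C' [D1' D2']].
      split; [|split].
      * apply continuity_2d_pt_mult; auto.
      * apply (ex_derive_mult (fun x => f x v) (fun x => h x v)); auto.
      * apply (ex_derive_mult (fun y => f u y) (fun y => h u y)); auto.
    + apply Ck_ext with (fun u v => du f u v * h u v + f u v * du h u v).
      * intros u v Huv. destruct (F0 u v Huv) as [_ [D1 _]], (H0 u v Huv) as [_ [D1' _]].
        unfold du. now rewrite (Derive_mult (fun x => f x v) (fun x => h x v)).
      * apply Ck_plus; apply IH; auto.
    + apply Ck_ext with (fun u v => dv f u v * h u v + f u v * dv h u v).
      * intros u v Huv. destruct (F0 u v Huv) as [_ [_ D2]], (H0 u v Huv) as [_ [_ D2']].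
        unfold dv. now rewrite (Derive_mult (fun y => f u y) (fun y => h u y)).
      * apply Ck_plus; apply IH; auto.
Qed.

Lemma Ck_ex_diff_n n f u v : Ck n U f -> U u v -> ex_diff_n f n u v.
Proof.
  revert f. induction n as [|n IH]; intros f Hf Huv; simpl in *.
  - split; [now apply Hf|exact I].
  - destruct Hf as [H0 [H1 H2]]. destruct (H0 u v Huv) as [C [D1 D2]].
    repeat split; auto.
Qed.

Lemma smooth_du f : smooth U f -> smooth U (du f).
Proof. intros Hf k. exact (proj1 (proj2 (Hf (S k)))). Qed.

Lemma smooth_ex_derive_u f u v : smooth U f -> U u v -> ex_derive (fun x => f x v) u.
Proof. intros Hf Huv. exact (proj1 (proj2 (proj1 (Hf 1%nat) u v Huv))). Qed.

Lemma smooth_delta g : smooth_metric U g -> smooth U (delta g).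
Proof.
  intros [HE [HF HG]] k. unfold delta.
  apply Ck_ext with (fun u v => mE g u v * mG g u v + - (mF g u v * mF g u v)).
  - intros u v _. ring.
  - apply Ck_plus, Ck_opp, Ck_mult; auto. now apply Ck_mult.
Qed.

End Smoothness.

Definition qform (A B C x y : R) : R := A * x ^ 2 + 2 * B * x * y + C * y ^ 2.

Definition hessian_form (f : fun2) (u v : R) : R -> R -> R :=
  qform (du (du f) u v) (du (dv f) u v) (dv (dv f) u v).

Lemma qform_scal A B C t x y : qform A B C (t * x) (t * y) = t ^ 2 * qform A B C x y.
Proof. unfold qform. ring. Qed.

Lemma qform_lower_bound A B C x y :
  (A * C - B ^ 2) * (x ^ 2 + y ^ 2) <= (A + C) * qform A B C x y.
Proof.
  assert (E : (A + C) * qform A B C x y - (A * C - B ^ 2) * (x ^ 2 + y ^ 2)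
              = (A * x + B * y) ^ 2 + (B * x + C * y) ^ 2) by (unfold qform; ring).
  pose proof (pow2_ge_0 (A * x + B * y)). pose proof (pow2_ge_0 (B * x + C * y)). lra.
Qed.

Lemma qform_psd A B C : (forall x y, 0 <= qform A B C x y) ->
  0 <= A /\ 0 <= C /\ 0 <= A * C - B ^ 2.
Proof.
  intros H. unfold qform in H.
  pose proof (H 1 0). pose proof (H 0 1).
  assert (hA : 0 <= A) by nra. assert (hC : 0 <= C) by nra.
  split; [exact hA|split; [exact hC|]].
  pose proof (H B (- A)). pose proof (H (- (C + 1)) B).
  destruct (Rlt_le_dec 0 A) as [Ap|Az].
  - apply Rmult_le_reg_l with A; nra.
  - assert (A = 0) by lra. subst A. nra.
Qed.

Lemma qform_pd A B C : (forall x y, 0 <= qform A B C x y) -> A * C - B ^ 2 <> 0 ->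
  0 < A /\ 0 < C /\ 0 < A * C - B ^ 2.
Proof.
  intros H Hdet. destruct (qform_psd A B C H) as [hA [hC hD]].
  assert (0 < A * C - B ^ 2) by lra. pose proof (pow2_ge_0 B).
  split; [|split]; nra.
Qed.

Lemma sqr_sum_pos x y : (x, y) <> (0, 0) -> 0 < x ^ 2 + y ^ 2.
Proof.
  intros hxy. destruct (Req_dec x 0) as [->|hx].
  - assert (y <> 0) by (intros ->; now apply hxy). pose proof (pow2_gt_0 y). lra.
  - pose proof (pow2_gt_0 x hx). pose proof (pow2_ge_0 y). lra.
Qed.

Lemma qform_pos A B C x y : 0 <= A -> 0 < A * C - B ^ 2 -> (x, y) <> (0, 0) ->
  0 < qform A B C x y.
Proof.
  intros hA hD hxy. pose proof (pow2_ge_0 B).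
  assert (hAC : 0 < A + C) by nra.
  pose proof (sqr_sum_pos x y hxy).
  pose proof (qform_lower_bound A B C x y). nra.
Qed.

Lemma nonpos_of_le_linear c K r : 0 < r -> (forall t, 0 < t < r -> c <= K * t) -> c <= 0.
Proof.
  intros Hr H. destruct (Rle_lt_dec c 0) as [|Hc]; [assumption|exfalso].
  pose proof (Rle_abs K). pose proof (Rabs_pos K).
  set (t := Rmin (r / 2) (c / (2 * (Rabs K + 1)))).
  assert (t0 : 0 < t) by (apply Rmin_pos; [lra|apply Rdiv_lt_0_compat; lra]).
  assert (t1 : t <= r / 2) by apply Rmin_l.
  assert (t2 : t * (2 * (Rabs K + 1)) <= c).
  { apply Rle_trans with (c / (2 * (Rabs K + 1)) * (2 * (Rabs K + 1))).
    - apply Rmult_le_compat_r; [lra|apply Rmin_r].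
    - right. field. lra. }
  specialize (H t ltac:(lra)). nra.
Qed.

Lemma cubic_germ_nonneg a q K r : 0 < r ->
  (forall t, 0 < t < r -> 0 <= a * t + q * t ^ 2 + K * t ^ 3 /\
                          0 <= - a * t + q * t ^ 2 + K * t ^ 3) ->
  a = 0 /\ 0 <= q.
Proof.
  intros Hr H. split.
  - assert (Ha : Rabs a <= 0).
    { apply (nonpos_of_le_linear _ (Rabs q + Rabs K) (Rmin r 1)).
      { apply Rmin_pos; lra. }
      intros t [Ht0 Htr]. pose proof (Rmin_l r 1). pose proof (Rmin_r r 1).
      destruct (H t ltac:(lra)) as [Hp Hm].
      pose proof (Rle_abs q). pose proof (Rle_abs K).
      assert (Rabs a * t <= q * t ^ 2 + K * t ^ 3).
      { destruct (Rle_lt_dec 0 a); [rewrite Rabs_pos_eq|rewrite Rabs_left]; lra. }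
      assert (Ht2 : 0 < t ^ 2) by (apply pow_lt; lra).
      assert (q * t ^ 2 <= Rabs q * t ^ 2) by (apply Rmult_le_compat_r; lra).
      assert (K * t ^ 3 <= Rabs K * t ^ 2).
      { replace (K * t ^ 3) with (K * t * t ^ 2) by ring.
        apply Rmult_le_compat_r; [lra|]. pose proof (Rabs_pos K). nra. }
      apply Rmult_le_reg_r with t; [lra|].
      replace (_ * t * t) with ((Rabs q + Rabs K) * t ^ 2) by ring. lra. }
    pose proof (Rabs_pos a). now apply Rabs_eq_0, Rle_antisym.
  - assert (- q <= 0); [|lra].
    apply (nonpos_of_le_linear _ K r Hr). intros t Ht.
    destruct (H t Ht) as [Hp Hm].
    assert (Ht2 : 0 < t ^ 2) by (apply pow_lt; lra).
    apply Rmult_le_reg_r with (t ^ 2); [exact Ht2|].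
    replace (K * t * t ^ 2) with (K * t ^ 3) by ring. lra.
Qed.

Lemma Rmax_abs_sqr_le x y : Rmax (Rabs x) (Rabs y) ^ 2 <= x ^ 2 + y ^ 2.
Proof.
  pose proof (pow2_ge_0 x). pose proof (pow2_ge_0 y).
  apply Rmax_case; rewrite pow2_abs; lra.
Qed.

Lemma Rabs_lt_of_sqr_sum_lt x y r : 0 < r -> x ^ 2 + y ^ 2 < r ^ 2 -> Rabs x < r.
Proof.
  intros Hr H. pose proof (pow2_ge_0 y). rewrite <- pow2_abs in H.
  destruct (Rlt_le_dec (Rabs x) r) as [|Hle]; [assumption|].
  assert (r ^ 2 <= Rabs x ^ 2) by (apply pow_incr; lra). lra.
Qed.

Lemma pos_of_taylor2_pd A B C D x y d : 0 <= A -> 0 < A * C - B ^ 2 -> (x, y) <> (0, 0) ->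
  Rmax (Rabs x) (Rabs y) * (2 * (A + C) * (Rabs D + 1)) < A * C - B ^ 2 ->
  Rabs (d - qform A B C x y / 2) <= D * Rmax (Rabs x) (Rabs y) ^ 3 ->
  0 < d.
Proof.
  intros hA hdet hxy hm hd.
  set (m := Rmax (Rabs x) (Rabs y)) in *.
  set (rho := x ^ 2 + y ^ 2).
  pose proof (pow2_ge_0 B). pose proof (Rabs_pos D). pose proof (Rle_abs D).
  assert (hAC : 0 < A + C) by nra.
  assert (hm0 : 0 <= m) by (unfold m; eapply Rle_trans; [apply Rabs_pos|apply Rmax_l]).
  assert (hrho : 0 < rho) by now apply sqr_sum_pos.
  assert (hQ : (A * C - B ^ 2) * rho <= (A + C) * qform A B C x y) by apply qform_lower_bound.
  assert (hcube : D * m ^ 3 <= Rabs D * m * rho).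
  { assert (hm2 : m ^ 2 <= rho) by apply Rmax_abs_sqr_le.
    apply Rle_trans with (Rabs D * m ^ 3); [apply Rmult_le_compat_r; [now apply pow_le|lra]|].
    replace (Rabs D * m ^ 3) with (Rabs D * m * m ^ 2) by ring.
    apply Rmult_le_compat_l; [now apply Rmult_le_pos|exact hm2]. }
  assert (hsmall : 2 * (A + C) * (Rabs D * m) < A * C - B ^ 2) by nra.
  apply Rabs_le_between in hd.
  assert (0 < rho * (A * C - B ^ 2 - 2 * (A + C) * (Rabs D * m))) by (apply Rmult_lt_0_compat; lra).
  nra.
Qed.

Lemma DL_pol_2 f u v x y : DL_pol 2 f u v x y =
  f u v + du f u v * x + dv f u v * y + hessian_form f u v x y / 2.
Proof.
  unfold DL_pol, differential, hessian_form, qform. simpl sum_f_R0.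
  change (du (du f) u v) with (partial_derive 2 0 f u v).
  change (du (dv f) u v) with (partial_derive 1 1 f u v).
  change (dv (dv f) u v) with (partial_derive 0 2 f u v).
  change (du f u v) with (partial_derive 1 0 f u v).
  change (dv f u v) with (partial_derive 0 1 f u v).
  change (f u v) with (partial_derive 0 0 f u v).
  unfold Binomial.C. simpl. field.
Qed.

Lemma taylor2_origin U f : open2 U -> U 0 0 -> smooth U f ->
  exists D r, 0 < r /\ forall x y, Rabs x < r -> Rabs y < r -> U x y /\
    Rabs (f x y - (f 0 0 + du f 0 0 * x + dv f 0 0 * y + hessian_form f 0 0 x y / 2))
      <= D * Rmax (Rabs x) (Rabs y) ^ 3.
Proof.
  intros HU H0 Hf.
  assert (Hloc : locally_2d (fun u v => ex_diff_n f 3 u v) 0 0).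
  { apply locally_2d_impl with (2 := open2_locally_2d U HU 0 0 H0).
    apply locally_2d_forall. intros u v. now apply Ck_ex_diff_n. }
  destruct (Taylor_Lagrange_2d f 2 0 0 Hloc) as [D [d Hd]].
  destruct (open2_locally_2d U HU 0 0 H0) as [e He].
  exists D, (Rmin d e). split; [apply Rmin_pos; apply cond_pos|].
  intros x y hx hy.
  pose proof (Rmin_l d e). pose proof (Rmin_r d e).
  split.
  - apply He; rewrite Rminus_0_r; lra.
  - pose proof (Hd x y ltac:(rewrite Rminus_0_r; lra) ltac:(rewrite Rminus_0_r; lra)) as Hxy.
    now rewrite !Rminus_0_r, DL_pol_2 in Hxy.
Qed.

Lemma nonneg_taylor2_jet (phi : fun2) a b A B C D r : 0 < r ->
  (forall x y, Rabs x < r -> Rabs y < r -> 0 <= phi x y /\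
     Rabs (phi x y - (a * x + b * y + qform A B C x y / 2)) <= D * Rmax (Rabs x) (Rabs y) ^ 3) ->
  a = 0 /\ b = 0 /\ forall x y, 0 <= qform A B C x y.
Proof.
  intros Hr H.
  assert (Hray : forall x0 y0, a * x0 + b * y0 = 0 /\ 0 <= qform A B C x0 y0 / 2).
  { intros x0 y0.
    set (N := Rabs x0 + Rabs y0 + 1).
    pose proof (Rabs_pos x0). pose proof (Rabs_pos y0). pose proof (Rabs_pos D).
    assert (HN : 0 < N) by (unfold N; lra).
    assert (Hline : forall s, Rabs s < r / N ->
      0 <= (a * x0 + b * y0) * s + qform A B C x0 y0 / 2 * s ^ 2 + Rabs D * N ^ 3 * Rabs s ^ 3).
    { intros s Hs. pose proof (Rabs_pos s).
      assert (HsN : Rabs s * N < r).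
      { apply Rmult_lt_compat_r with (r := N) in Hs; [|exact HN].
        unfold Rdiv in Hs. now rewrite Rmult_assoc, Rinv_l, Rmult_1_r in Hs by lra. }
      assert (Hx : Rabs (s * x0) <= Rabs s * N) by (rewrite Rabs_mult; unfold N; nra).
      assert (Hy : Rabs (s * y0) <= Rabs s * N) by (rewrite Rabs_mult; unfold N; nra).
      destruct (H (s * x0) (s * y0)) as [Hpos Hbd]; [lra|lra|].
      set (m := Rmax (Rabs (s * x0)) (Rabs (s * y0))) in Hbd.
      assert (hm0 : 0 <= m) by (unfold m; eapply Rle_trans; [apply Rabs_pos|apply Rmax_l]).
      assert (hm : m <= Rabs s * N) by (unfold m; now apply Rmax_lub).
      assert (D * m ^ 3 <= Rabs D * N ^ 3 * Rabs s ^ 3).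
      { apply Rle_trans with (Rabs D * m ^ 3).
        - apply Rmult_le_compat_r; [now apply pow_le|apply Rle_abs].
        - replace (Rabs D * N ^ 3 * Rabs s ^ 3) with (Rabs D * (Rabs s * N) ^ 3) by ring.
          apply Rmult_le_compat_l; [lra|]. now apply pow_incr. }
      rewrite qform_scal in Hbd. apply Rabs_le_between in Hbd. lra. }
    apply (cubic_germ_nonneg _ _ (Rabs D * N ^ 3) (r / N)); [apply Rdiv_lt_0_compat; lra|].
    intros t Ht. split.
    - pose proof (Hline t ltac:(rewrite Rabs_pos_eq; lra)) as Ht'.
      rewrite (Rabs_pos_eq t) in Ht' by lra. lra.
    - pose proof (Hline (- t) ltac:(rewrite Rabs_Ropp, Rabs_pos_eq; lra)) as Ht'.
      rewrite Rabs_Ropp, (Rabs_pos_eq t) in Ht' by lra.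
      replace ((- t) ^ 2) with (t ^ 2) in Ht' by ring. lra. }
  destruct (Hray 1 0) as [Ha _]. destruct (Hray 0 1) as [Hb _].
  split; [lra|split; [lra|]].
  intros x y. destruct (Hray x y) as [_ Hq]. lra.
Qed.

Lemma nonneg_min_jet U f : open2 U -> U 0 0 -> smooth U f ->
  (forall u v, U u v -> 0 <= f u v) -> f 0 0 = 0 ->
  du f 0 0 = 0 /\ dv f 0 0 = 0 /\ forall x y, 0 <= hessian_form f 0 0 x y.
Proof.
  intros HU H0 Hf Hpos Hf0.
  destruct (taylor2_origin U f HU H0 Hf) as [D [r [Hr Ht]]].
  apply (nonneg_taylor2_jet f _ _ _ _ _ D r Hr).
  intros x y hx hy. destruct (Ht x y hx hy) as [HUxy Hbd].
  split; [now apply Hpos|]. rewrite Hf0, Rplus_0_l in Hbd. exact Hbd.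
Qed.

Lemma nonneg_isolated_zero U f : open2 U -> U 0 0 -> smooth U f ->
  (forall u v, U u v -> 0 <= f u v) -> f 0 0 = 0 ->
  du (du f) 0 0 * dv (dv f) 0 0 - du (dv f) 0 0 ^ 2 <> 0 ->
  exists r, 0 < r /\ forall x y, (x, y) <> (0, 0) -> x ^ 2 + y ^ 2 < r ^ 2 ->
    U x y /\ 0 < f x y.
Proof.
  intros HU H0 Hf Hpos Hf0 Hdet.
  destruct (nonneg_min_jet U f HU H0 Hf Hpos Hf0) as [Ha [Hb Hpsd]].
  destruct (qform_pd _ _ _ Hpsd Hdet) as [hA [hC hD]].
  destruct (taylor2_origin U f HU H0 Hf) as [D [r [Hr Ht]]].
  set (A := du (du f) 0 0) in *. set (B := du (dv f) 0 0) in *. set (C := dv (dv f) 0 0) in *.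
  set (K := 2 * (A + C) * (Rabs D + 1)).
  assert (HK : 0 < K) by (unfold K; pose proof (Rabs_pos D); apply Rmult_lt_0_compat; lra).
  (* below this radius the cubic Taylor remainder is dominated by the Hessian *)
  set (rho := Rmin r ((A * C - B ^ 2) / K)).
  assert (Hrho : 0 < rho) by (apply Rmin_pos; [exact Hr|now apply Rdiv_lt_0_compat]).
  exists rho. split; [exact Hrho|]. intros x y Hxy Hxyr.
  pose proof (Rabs_lt_of_sqr_sum_lt x y _ Hrho Hxyr) as hx.
  rewrite Rplus_comm in Hxyr. pose proof (Rabs_lt_of_sqr_sum_lt y x _ Hrho Hxyr) as hy.
  assert (Hrho_r : rho <= r) by apply Rmin_l.
  assert (Hrho_K : rho <= (A * C - B ^ 2) / K) by apply Rmin_r.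
  destruct (Ht x y ltac:(lra) ltac:(lra)) as [HUxy Hbd]. split; [exact HUxy|].
  apply (pos_of_taylor2_pd A B C D x y); [lra|exact hD|exact Hxy| |].
  - assert (Hm : Rmax (Rabs x) (Rabs y) < (A * C - B ^ 2) / K) by (apply Rmax_lub_lt; lra).
    apply Rmult_lt_compat_r with (r := K) in Hm; [|exact HK].
    unfold Rdiv in Hm. now rewrite Rmult_assoc, Rinv_l, Rmult_1_r in Hm by lra.
  - rewrite Hf0, Ha, Hb in Hbd. unfold hessian_form in Hbd. fold A B C in Hbd.
    replace (0 + 0 * x + 0 * y + qform A B C x y / 2) with (qform A B C x y / 2) in Hbd by ring.
    exact Hbd.
Qed.

Lemma Derive2_mult_minus_sqr (e h f : R -> R) x :
  locally x (fun y => ex_derive e y /\ ex_derive h y /\ ex_derive f y) ->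
  ex_derive (Derive e) x -> ex_derive (Derive h) x -> ex_derive (Derive f) x ->
  Derive (fun y => Derive (fun z => e z * h z - f z ^ 2) y) x =
  Derive (Derive e) x * h x + 2 * Derive e x * Derive h x + e x * Derive (Derive h) x
  - 2 * Derive f x ^ 2 - 2 * f x * Derive (Derive f) x.
Proof.
  intros Hl He Hh Hf.
  destruct (locally_singleton _ _ Hl) as [He0 [Hh0 Hf0]].
  rewrite (Derive_ext_loc _
    (fun y => Derive e y * h y + e y * Derive h y - 2 * (f y * Derive f y))).
  2: { apply filter_imp with (2 := Hl). intros y [H1 [H2 H3]].
       rewrite (Derive_ext (fun z => e z * h z - f z ^ 2) (fun z => e z * h z - f z * f z))
         by (intros; ring).
       rewrite Derive_minus, !Derive_mult by (auto; apply ex_derive_mult; auto). ring. }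
  rewrite Derive_minus.
  2: apply (ex_derive_plus (fun y => Derive e y * h y) (fun y => e y * Derive h y));
       apply ex_derive_mult; auto.
  2: apply (ex_derive_scal (fun y => f y * Derive f y)); apply ex_derive_mult; auto.
  rewrite (Derive_plus (fun y => Derive e y * h y) (fun y => e y * Derive h y))
    by (apply ex_derive_mult; auto).
  rewrite (Derive_scal (fun y => f y * Derive f y)), !Derive_mult by auto. ring.
Qed.

Lemma bform_diag g u v a b : bform g u v a b a b = qform (mE g u v) (mF g u v) (mG g u v) a b.
Proof. unfold bform, qform. ring. Qed.

Lemma psd_metric_gram U g u v : psd_metric U g -> U u v ->
  0 <= mE g u v /\ 0 <= mG g u v /\ 0 <= delta g u v.
Proof.
  intros Hpsd Huv. apply qform_psd. intros a b. rewrite <- bform_diag. now apply Hpsd.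
Qed.

Lemma not_singular_of_delta_pos U g u v : psd_metric U g -> U u v -> 0 < delta g u v ->
  ~ singular U g u v.
Proof.
  intros Hpsd Huv Hd [_ Hs]. apply Hs. intros a b Hab. rewrite bform_diag.
  apply qform_pos; [|exact Hd|exact Hab]. now apply (psd_metric_gram U g u v).
Qed.

Lemma delta_eq0_of_singular U g u v : psd_metric U g -> singular U g u v -> delta g u v = 0.
Proof.
  intros Hpsd Hs. pose proof (proj2 (proj2 (psd_metric_gram U g u v Hpsd (proj1 Hs)))).
  destruct (Rle_lt_dec (delta g u v) 0) as [|Hd]; [lra|].
  exfalso. now apply (not_singular_of_delta_pos U g u v Hpsd (proj1 Hs)).
Qed.

Lemma nullspace_iff g u v a b : nullspace g u v a b <->
  mE g u v * a + mF g u v * b = 0 /\ mF g u v * a + mG g u v * b = 0.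
Proof.
  unfold nullspace, bform. split.
  - intros H. pose proof (H 1 0). pose proof (H 0 1). split; lra.
  - intros [H1 H2] c d.
    transitivity (c * (mE g u v * a + mF g u v * b) + d * (mF g u v * a + mG g u v * b));
      [ring|]. rewrite H1, H2. ring.
Qed.

Lemma sym2_kernel_iff E F G a b : E <> 0 -> E * G - F ^ 2 = 0 ->
  (E * a + F * b = 0 /\ F * a + G * b = 0) <-> exists t, a = t * - F /\ b = t * E.
Proof.
  intros HE Hdet. split.
  - intros [H1 _]. exists (b / E). split; [|field; exact HE].
    apply Rmult_eq_reg_l with E; [|exact HE]. field_simplify; [lra|exact HE].
  - intros [t [-> ->]]. split; [ring|].
    transitivity (t * (E * G - F ^ 2)); [ring|]. rewrite Hdet. ring.
Qed.

Lemma nullspace_dim1_of_det0 g u v : mE g u v <> 0 \/ mG g u v <> 0 -> delta g u v = 0 ->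
  nullspace_dim1 g u v.
Proof.
  unfold delta. intros [HE|HG] Hdet.
  - exists (- mF g u v), (mE g u v). split; [intros H; injection H; auto|].
    intros a b. rewrite nullspace_iff. now apply sym2_kernel_iff.
  - exists (mG g u v), (- mF g u v). split; [intros H; injection H; auto|].
    intros a b. rewrite nullspace_iff.
    assert (Hdet' : mG g u v * mE g u v - mF g u v ^ 2 = 0) by lra.
    pose proof (sym2_kernel_iff _ _ _ b a HG Hdet') as Hker. split.
    + intros [H1 H2]. destruct (proj1 Hker) as [t [Hb Ha]]; [split; lra|]. now exists t.
    + intros [t [Ha Hb]]. destruct (proj2 Hker) as [H1 H2]; [now exists t|]. split; lra.
Qed.

Lemma delta_uu_of_vanishing_metric U g : open2 U -> U 0 0 ->
  smooth_metric U g -> psd_metric U g ->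
  mE g 0 0 = 0 -> mF g 0 0 = 0 -> mG g 0 0 = 0 ->
  du (du (delta g)) 0 0 = -2 * du (mF g) 0 0 ^ 2.
Proof.
  intros HU H0 [SE [SF SG]] Hpsd HE HF HG.
  destruct (nonneg_min_jet U (mE g) HU H0 SE) as [HEu _]; [|exact HE|].
  { intros u v Huv. apply (psd_metric_gram U g u v Hpsd Huv). }
  destruct (nonneg_min_jet U (mG g) HU H0 SG) as [HGu _]; [|exact HG|].
  { intros u v Huv. apply (psd_metric_gram U g u v Hpsd Huv). }
  change (du (du (delta g)) 0 0) with
    (Derive (fun x => Derive (fun y => mE g y 0 * mG g y 0 - mF g y 0 ^ 2) x) 0).
  rewrite Derive2_mult_minus_sqr.
  - change (Derive (fun y => mE g y 0) 0) with (du (mE g) 0 0).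
    change (Derive (fun y => mG g y 0) 0) with (du (mG g) 0 0).
    change (Derive (fun y => mF g y 0) 0) with (du (mF g) 0 0).
    rewrite HEu, HGu, HE, HF, HG. ring.
  - apply filter_imp with (2 := open2_locally_u U HU 0 0 H0). intros x Hx.
    split; [|split]; now apply (smooth_ex_derive_u U).
  - apply (smooth_ex_derive_u U (du (mE g))); [now apply smooth_du|exact H0].
  - apply (smooth_ex_derive_u U (du (mG g))); [now apply smooth_du|exact H0].
  - apply (smooth_ex_derive_u U (du (mF g))); [now apply smooth_du|exact H0].
Qed.

Theorem proposition4p3 (U : R -> R -> Prop) (g : metric) :
  open2 U -> U 0 0 ->
  smooth_metric U g -> psd_metric U g -> admissible U g ->
  intrinsic_cross_cap U g ->
  isolated_singular U g /\ nullspace_dim1 g 0 0.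
Proof.
  intros HU H0 Hsm Hpsd _ [Hsing Hcc].
  pose proof (smooth_delta U HU g Hsm) as Hsd.
  assert (Hdpos : forall u v, U u v -> 0 <= delta g u v)
    by (intros u v Huv; apply (psd_metric_gram U g u v Hpsd Huv)).
  pose proof (delta_eq0_of_singular U g 0 0 Hpsd Hsing) as Hd0.
  split.
  - destruct (nonneg_isolated_zero U (delta g) HU H0 Hsd Hdpos Hd0 Hcc) as [r [Hr Hiso]].
    exists r. split; [exact Hr|]. intros u v Huv Hur.
    destruct (Hiso u v Huv Hur) as [HUuv Hpos].
    now apply (not_singular_of_delta_pos U g u v Hpsd HUuv).
  - apply nullspace_dim1_of_det0; [|exact Hd0].
    destruct (Req_dec (mE g 0 0) 0) as [HE|HE]; [|now left].
    destruct (Req_dec (mG g 0 0) 0) as [HG|HG]; [|now right].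
    exfalso.
    assert (HF : mF g 0 0 = 0).
    { unfold delta in Hd0. rewrite HE in Hd0. apply Rsqr_0_uniq. unfold Rsqr. lra. }
    destruct (nonneg_min_jet U (delta g) HU H0 Hsd Hdpos Hd0) as [_ [_ Hhess]].
    destruct (qform_pd _ _ _ Hhess Hcc) as [HA _].
    rewrite (delta_uu_of_vanishing_metric U g HU H0 Hsm Hpsd HE HF HG) in HA.
    pose proof (pow2_ge_0 (du (mF g) 0 0)). lra.
Qed.
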